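(* Let $P\subseteq[0,1]^n$ be a polytope and $c\in\mathbb{R}^n$, and consider the instance $\mathcal{I}$: $\max\{c^\top x: x\in P\cap\{0,1\}^n\}$. Let $Q\subseteq[0,1]^{2n}$ be the convex hull of all points $(x,y)$ where $x$ is a vertex of $P$ and, for each $i$, $y_i=1$ if $x_i\in\{0,1\}$ and $y_i=0$ if $x_i\in(0,1)$. Let $BDG(\mathcal{I})$ be the instance $\max\{c^\top x:(x,y)\in Q,\ x\in\{0,1\}^n,\ y\in\{0,1\}^n\}$. Then $\{x:(x,y)\in Q\cap\{0,1\}^{2n}\}=P\cap\{0,1\}^n$ (so $BDG(\mathcal{I})$ is equivalent to $\mathcal{I}$), and there exists a branch-and-bound tree $\mathcal{T}^*(BDG(\mathcal{I}))$ that solves $BDG(\mathcal{I})$ with $|\mathcal{T}^*(BDG(\mathcal{I}))|\le 4n+1$.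
   Context: A branch-and-bound tree for a binary program over a polytope is a rooted binary tree in which each node corresponds to the polytope intersected with constraints fixing some variables to $0$ or $1$ (those fixed on the path from the root), and each internal node branches on one binary variable $z$, its two children adding $z=0$ and $z=1$ respectively. The tree solves the instance if at every leaf the LP relaxation is infeasible, or its optimal solution (an extreme point) is integral, or its value is no better than the best integral solution found at the leaves. $|\mathcal{T}|$ denotes the number of nodes. *)

From HB Require Import structures.
From mathcomp Require Import all_boot all_order all_algebra.
Set Implicit Arguments. Unset Strict Implicit. Unset Printing Implicit Defensive.
Import Order.TTheory GRing.Theory Num.Theory.
Local Open Scope ring_scope.

Section Defs.
Variable R : realFieldType.

Definition conv (m : nat) (A : 'rV[R]_m -> Prop) : 'rV[R]_m -> Prop :=
  fun x => exists (k : nat) (lam : 'I_k -> R) (p : 'I_k -> 'rV[R]_m),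
    (forall i, 0 <= lam i) /\ \sum_(i < k) lam i = 1 /\
    (forall i, A (p i)) /\ x = \sum_(i < k) lam i *: p i.

Definition is_polytope (m : nat) (P : 'rV[R]_m -> Prop) : Prop :=
  exists s : seq 'rV[R]_m, forall x, P x <-> conv (fun z => z \in s) x.

Definition is_vertex (m : nat) (F : 'rV[R]_m -> Prop) (x : 'rV[R]_m) : Prop :=
  F x /\ forall y z (t : R), F y -> F z -> 0 < t -> t < 1 ->
    x = t *: y + (1 - t) *: z -> y = z.

Definition binary (m : nat) (x : 'rV[R]_m) : Prop :=
  forall i, x 0 i = 0 \/ x 0 i = 1.

Definition dot (m : nat) (c x : 'rV[R]_m) : R := \sum_(i < m) c 0 i * x 0 i.

Definition int_indicator (n : nat) (x : 'rV[R]_n) : 'rV[R]_n :=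
  \row_i (if (x 0 i == 0) || (x 0 i == 1) then 1 else 0).

Definition bdg_hull (n : nat) (P : 'rV[R]_n -> Prop) : 'rV[R]_(n + n) -> Prop :=
  conv (fun z => exists x, is_vertex P x /\ z = row_mx x (int_indicator x)).

End Defs.

Inductive bbtree (m : nat) : Type :=
| BBLeaf : bbtree m
| BBNode : 'I_m -> bbtree m -> bbtree m -> bbtree m.
Arguments BBLeaf {m}.

Fixpoint bbsize (m : nat) (t : bbtree m) : nat :=
  match t with
  | BBLeaf => 1
  | BBNode _ t0 t1 => (bbsize t0 + bbsize t1).+1
  end.

Section BB.
Variables (R : realFieldType) (m : nat).

(* G is (extensionally) the LP feasible region of some leaf of t, when the
   root region is F; children of a node branching on j add z_j = 0 resp. z_j = 1 *)
Fixpoint is_leaf_region (t : bbtree m) (F G : 'rV[R]_m -> Prop) : Prop :=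
  match t with
  | BBLeaf => forall z, G z <-> F z
  | BBNode j t0 t1 =>
      is_leaf_region t0 (fun z => F z /\ z 0 j = 0) G \/
      is_leaf_region t1 (fun z => F z /\ z 0 j = 1) G
  end.

Definition lp_opt (F : 'rV[R]_m -> Prop) (c z : 'rV[R]_m) : Prop :=
  F z /\ forall w, F w -> dot c w <= dot c z.

Definition lp_infeasible (F : 'rV[R]_m -> Prop) : Prop := forall z, ~ F z.

Definition lp_integral (F : 'rV[R]_m -> Prop) (c : 'rV[R]_m) : Prop :=
  (exists z, lp_opt F c z /\ is_vertex F z) /\
  (forall z, lp_opt F c z -> is_vertex F z -> binary z).

Definition bb_solves (Q : 'rV[R]_m -> Prop) (c : 'rV[R]_m) (t : bbtree m) : Prop :=
  forall F, is_leaf_region t Q F ->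
    lp_infeasible F \/ lp_integral F c \/
    (forall w, F w -> exists G z, is_leaf_region t Q G /\ lp_integral G c /\
        lp_opt G c z /\ is_vertex G z /\ dot c w <= dot c z).

End BB.

(* Every generator (x, y(x)) of Q has y_i = 0 exactly when x_i is fractional,
   and all coordinates of Q lie in [0, 1].  Hence a point of Q with y_i = 0 has
   a fractional x_i, so branching on y_i and then on x_i closes both children of
   the y_i = 0 node; after n such levels the remaining leaf is Q /\ {y = 1}.
   A point of Q with y = 1 only uses generators with binary x, so this face is
   the convex hull of finitely many 0/1 points: its LP optimum is attained at
   one of them and all its vertices are 0/1, i.e. the leaf is integral.  Each
   level adds four nodes, giving 4n + 1 in total.  The same support argument
   shows that the 0/1 points of Q project exactly onto those of P. *)
From mathcomp Require Import all_boot all_order all_algebra.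
From mathcomp.algebra_tactics Require Import ring lra.
From mathcomp Require Import zify.
From Stdlib Require Import Classical ClassicalDescription FunctionalExtensionality.
From Stdlib Require Import PropExtensionality.
Import Order.TTheory GRing.Theory Num.Theory.
Local Open Scope ring_scope.
Set Implicit Arguments. Unset Strict Implicit.

Lemma forall_split_ord (m1 m2 : nat) (T : 'I_(m1 + m2) -> Prop) :
  (forall i, T (lshift m2 i)) -> (forall i, T (rshift m1 i)) -> forall j, T j.
Proof. by move=> Tl Tr j; rewrite -(splitK j); case: (split j). Qed.

Section ConvexWeights.
Variables (R : realFieldType) (K : nat) (lam : 'I_K -> R).
Hypotheses (lam_ge0 : forall k, 0 <= lam k) (lam_sum1 : \sum_(k < K) lam k = 1).

Lemma weight_gt0_exists : exists k, 0 < lam k.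
Proof.
apply: NNPP => no_pos; move/eqP: lam_sum1; apply/negP.
rewrite big1 ?(eq_sym 0) ?oner_eq0 // => k _.
apply/eqP; rewrite eq_le lam_ge0 andbT leNgt; apply/negP => lam_k.
by apply: no_pos; exists k.
Qed.

Lemma weighted_sum_eq0 (f : 'I_K -> R) : (forall k, 0 <= f k) ->
  \sum_(k < K) lam k * f k = 0 -> forall k, 0 < lam k -> f k = 0.
Proof.
move=> f_ge0 sum0 k lam_k.
have /(_ k isT) /eqP := psumr_eq0P (fun i _ => mulr_ge0 (lam_ge0 i) (f_ge0 i)) sum0.
by rewrite mulf_eq0 gt_eqF //= => /eqP.
Qed.

Lemma weighted_sum_eq1 (f : 'I_K -> R) : (forall k, f k <= 1) ->
  \sum_(k < K) lam k * f k = 1 -> forall k, 0 < lam k -> f k = 1.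
Proof.
move=> f_le1 sum1 k lam_k; apply/eqP; rewrite eq_sym -subr_eq0; apply/eqP.
apply: (weighted_sum_eq0 (f := fun k => 1 - f k)) => // [i|].
  by rewrite subr_ge0.
by under eq_bigr do rewrite mulrBr mulr1; rewrite sumrB lam_sum1 sum1 subrr.
Qed.

Lemma weighted_sum_in01 (f : 'I_K -> R) : (forall k, 0 <= f k <= 1) ->
  0 <= \sum_(k < K) lam k * f k <= 1.
Proof.
move=> f01; rewrite sumr_ge0 => [|k _]; last by case/andP: (f01 k) => *; rewrite mulr_ge0.
rewrite -lam_sum1 ler_sum // => k _.
by case/andP: (f01 k) => _ f_le1; rewrite ler_piMr.
Qed.

End ConvexWeights.

Lemma fintype_max (R : realFieldType) (T : finType) (B : T -> Prop) (f : T -> R) :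
  (exists b, B b) -> exists b, B b /\ forall b', B b' -> f b' <= f b.
Proof.
case=> b0 Bb0.
pose Bb b : bool := if excluded_middle_informative (B b) then true else false.
have BbP b : reflect (B b) (Bb b).
  by rewrite /Bb; case: excluded_middle_informative => h; constructor.
have [b /BbP Bb_b b_max] := arg_maxP f (introT (BbP b0) Bb0).
by exists b; split=> // b' /BbP /b_max.
Qed.

Section ConvexHull.
Variables (R : realFieldType) (m : nat).
Implicit Types (A B : 'rV[R]_m -> Prop) (x y z : 'rV[R]_m).

Definition unit_cube x := forall j, 0 <= x 0 j <= 1.

Lemma coord_sum_scale K (lam : 'I_K -> R) (p : 'I_K -> 'rV[R]_m) j :
  (\sum_(k < K) lam k *: p k) 0 j = \sum_(k < K) lam k * p k 0 j.
Proof. by rewrite summxE; apply: eq_bigr => k _; rewrite mxE. Qed.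

Lemma conv_comb_coord_eq0 K (lam : 'I_K -> R) (p : 'I_K -> 'rV[R]_m) j :
  (forall k, 0 <= lam k) -> (forall k, unit_cube (p k)) ->
  (\sum_(k < K) lam k *: p k) 0 j = 0 -> forall k, 0 < lam k -> p k 0 j = 0.
Proof.
move=> lam_ge0 p_cube; rewrite coord_sum_scale.
by apply: (weighted_sum_eq0 (f := fun k => p k 0 j) lam_ge0) => k; case/andP: (p_cube k j).
Qed.

Lemma conv_comb_coord_eq1 K (lam : 'I_K -> R) (p : 'I_K -> 'rV[R]_m) j :
  (forall k, 0 <= lam k) -> \sum_(k < K) lam k = 1 -> (forall k, unit_cube (p k)) ->
  (\sum_(k < K) lam k *: p k) 0 j = 1 -> forall k, 0 < lam k -> p k 0 j = 1.
Proof.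
move=> lam_ge0 lam1 p_cube; rewrite coord_sum_scale.
by apply: (weighted_sum_eq1 (f := fun k => p k 0 j) lam_ge0 lam1) => k; case/andP: (p_cube k j).
Qed.

Lemma conv_point A x : A x -> conv A x.
Proof.
move=> Ax; exists 1%N, (fun=> 1), (fun=> x).
by rewrite !big_ord1 scale1r.
Qed.

Lemma conv_sub A B : (forall x, A x -> B x) -> forall x, conv A x -> conv B x.
Proof.
move=> AB x [K [lam [p [lam_ge0 [lam1 [Ap ->]]]]]].
by exists K, lam, p; do !split=> //; move=> k; apply: AB.
Qed.

Lemma conv_supported A K (lam : 'I_K -> R) (p : 'I_K -> 'rV[R]_m) :
  (forall k, 0 <= lam k) -> \sum_(k < K) lam k = 1 ->
  (forall k, 0 < lam k -> A (p k)) -> conv A (\sum_(k < K) lam k *: p k).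
Proof.
move=> lam_ge0 lam1 Ap; have [k0 lam_k0] := weight_gt0_exists lam_ge0 lam1.
exists K, lam, (fun k => if 0 < lam k then p k else p k0); do !split=> //.
  by move=> k; case: ifP => [/Ap|_]; last exact: Ap.
apply: eq_bigr => k _; case: ifPn => // lam_k.
have -> : lam k = 0 by apply/eqP; rewrite eq_le lam_ge0 andbT leNgt.
by rewrite !scale0r.
Qed.

Lemma conv_unit_cube A : (forall x, A x -> unit_cube x) ->
  forall x, conv A x -> unit_cube x.
Proof.
move=> A_cube x [K [lam [p [lam_ge0 [lam1 [Ap ->]]]]]] j.
by rewrite coord_sum_scale weighted_sum_in01 // => k; apply: A_cube.
Qed.

Lemma conv_dot_le A (c : 'rV[R]_m) (M : R) : (forall x, A x -> dot c x <= M) ->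
  forall x, conv A x -> dot c x <= M.
Proof.
move=> A_le x [K [lam [p [lam_ge0 [lam1 [Ap ->]]]]]].
have -> : dot c (\sum_(k < K) lam k *: p k) = \sum_(k < K) lam k * dot c (p k).
  rewrite /dot; under eq_bigr do rewrite coord_sum_scale mulr_sumr.
  rewrite exchange_big /=; apply: eq_bigr => k _; rewrite mulr_sumr.
  by apply: eq_bigr => j _; rewrite mulrCA.
rewrite -[M]mul1r -lam1 mulr_suml ler_sum // => k _.
by rewrite ler_wpM2l // A_le.
Qed.

Lemma binary_unit_cube x : binary x -> unit_cube x.
Proof. by move=> x01 j; case: (x01 j) => ->; rewrite ?lexx ?ler01. Qed.

Lemma binary_extreme x y z (t : R) : binary x -> unit_cube y -> unit_cube z ->
  0 < t -> t < 1 -> x = t *: y + (1 - t) *: z -> y = z.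
Proof.
move=> x01 y01 z01 t_gt0 t_lt1 x_eq; apply/rowP => j.
have := congr1 (fun v : 'rV_m => v 0 j) x_eq; rewrite !mxE.
move: (y01 j) (z01 j) => /andP[y_ge0 y_le1] /andP[z_ge0 z_le1].
by case: (x01 j) => ->; nra.
Qed.

Lemma binary_is_vertex (F : 'rV[R]_m -> Prop) x :
  (forall y, F y -> unit_cube y) -> F x -> binary x -> is_vertex F x.
Proof.
move=> F_cube Fx x01; split=> // y z t Fy Fz.
exact: binary_extreme x01 (F_cube _ Fy) (F_cube _ Fz).
Qed.

(* z1 and z0 renormalise the weights of the points with p_j = 1, resp. p_j = 0. *)
Lemma conv_split_coord A z j : (forall x, A x -> binary x) -> conv A z ->
  0 < z 0 j < 1 -> exists z1 z0, [/\ conv A z1, conv A z0,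
    z1 0 j = 1, z0 0 j = 0 & z = z 0 j *: z1 + (1 - z 0 j) *: z0].
Proof.
move=> A01 [K [lam [p [lam_ge0 [lam1 [Ap z_eq]]]]]] /andP[s_gt0 s_lt1].
set s := z 0 j in s_gt0 s_lt1 *.
have s_eq : s = \sum_(k < K) lam k * p k 0 j by rewrite /s z_eq coord_sum_scale.
have p01 k : p k 0 j = 0 \/ p k 0 j = 1 by apply: A01.
have p_ge0 k : 0 <= p k 0 j by case: (p01 k) => ->.
have p_le1 k : p k 0 j <= 1 by case: (p01 k) => ->; rewrite ?ler01.
have p_sq k : p k 0 j * p k 0 j = p k 0 j by case: (p01 k) => ->; rewrite ?mulr0 ?mulr1.
pose w1 k := lam k * p k 0 j / s.
pose w0 k := lam k * (1 - p k 0 j) / (1 - s).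
have sum1m : \sum_(k < K) lam k * (1 - p k 0 j) = 1 - s.
  by under eq_bigr do rewrite mulrBr mulr1; rewrite sumrB lam1 s_eq.
have s_neq0 : s != 0 by rewrite gt_eqF.
have s1_neq0 : 1 - s != 0 by rewrite subr_eq0 eq_sym lt_eqF.
exists (\sum_(k < K) w1 k *: p k), (\sum_(k < K) w0 k *: p k); split.
- exists K, w1, p; split=> [k|]; first by rewrite divr_ge0 ?mulr_ge0 // ltW.
  by split=> //; rewrite -mulr_suml -s_eq divff.
- exists K, w0, p; split=> [k|].
    by rewrite divr_ge0 ?mulr_ge0 ?subr_ge0 // ?ltW // subr_gt0.
  by split=> //; rewrite -mulr_suml sum1m divff.
- rewrite coord_sum_scale /w1 -[RHS](divff s_neq0) [X in _ = X / _]s_eq mulr_suml.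
  by apply: eq_bigr => k _; rewrite mulrAC -(mulrA (lam k)) p_sq.
- rewrite coord_sum_scale big1 // => k _.
  by rewrite /w0 mulrAC -(mulrA (lam k)) mulrBl mul1r p_sq subrr mulr0 mul0r.
- rewrite !scaler_sumr -big_split z_eq; apply: eq_bigr => k _ /=.
  rewrite !scalerA -scalerDl /w1 /w0; congr (_ *: _); field.
  by rewrite s_neq0 s1_neq0.
Qed.

Lemma conv_vertex_binary A z : (forall x, A x -> binary x) ->
  is_vertex (conv A) z -> binary z.
Proof.
move=> A01 [Az z_ext] j; apply: NNPP => z_frac.
have z_cube := conv_unit_cube (fun x Ax => binary_unit_cube (A01 x Ax)) Az.
have /andP[z_ge0 z_le1] := z_cube j.
have z_in : 0 < z 0 j < 1.
  rewrite !lt_def z_ge0 z_le1 !andbT.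
  by apply/andP; split; apply/negP => /eqP e; apply: z_frac; [left|right].
have [z1 [z0 [Az1 Az0 z1j z0j z_eq]]] := conv_split_coord A01 Az z_in.
case/andP: z_in => s_gt0 s_lt1.
have := congr1 (fun v : 'rV_m => v 0 j) (z_ext _ _ _ Az1 Az0 s_gt0 s_lt1 z_eq).
by rewrite z1j z0j => /eqP; rewrite oner_eq0.
Qed.

Lemma binary_set_max A (f : 'rV[R]_m -> R) : (forall x, A x -> binary x) ->
  (exists x, A x) -> exists x, A x /\ forall y, A y -> f y <= f x.
Proof.
move=> A01 [x Ax].
pose of_bits (b : 'rV[bool]_m) : 'rV[R]_m := \row_j (b 0 j)%:R.
have bitsK y : binary y -> of_bits (\row_j (y 0 j == 1)) = y.
  move=> y01; apply/rowP => j; rewrite !mxE.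
  by case: (y01 j) => ->; rewrite ?eqxx // eq_sym oner_eq0.
have [|b [Ab b_max]] := @fintype_max _ _ (fun b => A (of_bits b)) (f \o of_bits).
  by exists (\row_j (x 0 j == 1)); rewrite bitsK //; apply: A01.
exists (of_bits b); split=> // y Ay.
by rewrite -(bitsK y (A01 y Ay)); apply: b_max; rewrite bitsK; last apply: A01.
Qed.

Lemma conv_binary_lp_integral A (c : 'rV[R]_m) : (forall x, A x -> binary x) ->
  (exists x, conv A x) -> lp_integral (conv A) c.
Proof.
move=> A01 [x [K [lam [p [lam_ge0 [lam1 [Ap _]]]]]]].
split; last by move=> z _; apply: conv_vertex_binary.
have [k _] := weight_gt0_exists lam_ge0 lam1.
have [a [Aa a_max]] := binary_set_max (dot c) A01 (ex_intro _ _ (Ap k)).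
exists a; split; first by split; [apply: conv_point | apply: conv_dot_le].
apply: binary_is_vertex; last by apply: A01.
  by apply: conv_unit_cube => y /A01 /binary_unit_cube.
exact: conv_point.
Qed.

End ConvexHull.

Section RowMx.
Variables (R : realFieldType) (m1 m2 : nat).
Implicit Types (x : 'rV[R]_m1) (y : 'rV[R]_m2).

Lemma row_mx_binary x y : binary (row_mx x y) <-> binary x /\ binary y.
Proof.
split=> [xy01|[x01 y01]].
  by split=> i; [move: (xy01 (lshift m2 i)); rewrite row_mxEl
                |move: (xy01 (rshift m1 i)); rewrite row_mxEr].
by apply: forall_split_ord => i; rewrite ?row_mxEl ?row_mxEr.
Qed.

Lemma row_mx_unit_cube x y : unit_cube x -> unit_cube y -> unit_cube (row_mx x y).
Proof. by move=> x01 y01; apply: forall_split_ord => i; rewrite ?row_mxEl ?row_mxEr. Qed.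

End RowMx.

Section BdgHull.
Variables (R : realFieldType) (n : nat) (P : 'rV[R]_n -> Prop).
Hypothesis P_cube : forall x, P x -> unit_cube x.
Implicit Types (x y : 'rV[R]_n) (z : 'rV[R]_(n + n)).

Definition bdg_points z := exists x, is_vertex P x /\ z = row_mx x (int_indicator x).

Definition bdg_binary_points z :=
  exists x, P x /\ binary x /\ z = row_mx x (const_mx 1).

Lemma int_indicator_unit_cube x : unit_cube (int_indicator x).
Proof. by move=> i; rewrite mxE; case: ifP; rewrite ?lexx ?ler01. Qed.

Lemma int_indicator_eq1 x i : int_indicator x 0 i = 1 -> x 0 i = 0 \/ x 0 i = 1.
Proof.
rewrite mxE; case: ifP => [/orP[] /eqP ->|_ /eqP]; [left|right|] => //.
by rewrite eq_sym oner_eq0.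
Qed.

Lemma int_indicator_eq0 x i : unit_cube x -> int_indicator x 0 i = 0 ->
  0 < x 0 i < 1.
Proof.
move=> x01; rewrite mxE; case: ifPn => [_ /eqP|]; first by rewrite oner_eq0.
rewrite negb_or => /andP[x_neq0 x_neq1] _; case/andP: (x01 i) => x_ge0 x_le1.
by rewrite !lt_def x_ge0 x_le1 x_neq0 eq_sym x_neq1.
Qed.

Lemma int_indicator_binary x : binary x -> int_indicator x = const_mx 1.
Proof. by move=> x01; apply/rowP => i; rewrite !mxE; case: (x01 i) => ->; rewrite ?eqxx ?orbT. Qed.

Lemma bdg_points_unit_cube z : bdg_points z -> unit_cube z.
Proof.
case=> x [[Px _] ->].
exact: row_mx_unit_cube (P_cube Px) (int_indicator_unit_cube x).
Qed.

Lemma bdg_points_vertex z : bdg_points z -> is_vertex P (lsubmx z).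
Proof. by case=> x [Vx ->]; rewrite row_mxKl. Qed.

Lemma bdg_points_indicator z i : bdg_points z ->
  z 0 (rshift n i) = int_indicator (lsubmx z) 0 i.
Proof. by case=> x [_ ->]; rewrite row_mxKl row_mxEr. Qed.

Lemma bdg_hull_unit_cube z : bdg_hull P z -> unit_cube z.
Proof. exact: conv_unit_cube bdg_points_unit_cube z. Qed.

Lemma bdg_hull_fractional z i : bdg_hull P z -> z 0 (rshift n i) = 0 ->
  0 < z 0 (lshift n i) < 1.
Proof.
move=> Qz y0; have /andP[z_ge0 z_le1] := bdg_hull_unit_cube Qz (lshift n i).
case: Qz y0 => K [lam [p [lam_ge0 [lam1 [Bp z_eq]]]]].
have p_cube k := bdg_points_unit_cube (Bp k).
rewrite {1}z_eq => y0.
have [k lam_k] := weight_gt0_exists lam_ge0 lam1.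
have /andP[pk_gt0 pk_lt1] : 0 < p k 0 (lshift n i) < 1.
  have -> : p k 0 (lshift n i) = lsubmx (p k) 0 i by rewrite mxE.
  apply: int_indicator_eq0; first exact: P_cube (bdg_points_vertex (Bp k)).1.
  by rewrite -(bdg_points_indicator i (Bp k)) (conv_comb_coord_eq0 lam_ge0 p_cube y0).
rewrite !lt_def z_ge0 z_le1 !andbT; apply/andP; split; apply/negP => /eqP zi.
  have z0 : (\sum_(k < K) lam k *: p k) 0 (lshift n i) = 0 by rewrite -z_eq.
  by move: pk_gt0; rewrite (conv_comb_coord_eq0 lam_ge0 p_cube z0) ?ltxx.
have z1 : (\sum_(k < K) lam k *: p k) 0 (lshift n i) = 1 by rewrite -z_eq.
by move: pk_lt1; rewrite (conv_comb_coord_eq1 lam_ge0 lam1 p_cube z1) ?ltxx.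
Qed.

Lemma bdg_hull_binary_proj x :
  (exists y, bdg_hull P (row_mx x y) /\ binary (row_mx x y)) <-> P x /\ binary x.
Proof.
split=> [[y [[K [lam [p [lam_ge0 [lam1 [Bp xy_eq]]]]]] /row_mx_binary[x01 _]]]|].
  split=> //; have [k lam_k] := weight_gt0_exists lam_ge0 lam1.
  suff <- : lsubmx (p k) = x by exact: (bdg_points_vertex (Bp k)).1.
  have p_cube k' := bdg_points_unit_cube (Bp k').
  apply/rowP => i; rewrite mxE.
  have xi : (\sum_(k < K) lam k *: p k) 0 (lshift n i) = x 0 i.
    by rewrite -xy_eq row_mxEl.
  case: (x01 i) xi => -> xi; first exact: conv_comb_coord_eq0 lam_ge0 p_cube xi k lam_k.
  exact: conv_comb_coord_eq1 lam_ge0 lam1 p_cube xi k lam_k.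
case=> Px x01; exists (int_indicator x); split.
  by apply: conv_point; exists x; split=> //; apply: binary_is_vertex.
by apply/row_mx_binary; split=> // i; rewrite int_indicator_binary // mxE; right.
Qed.

Lemma bdg_hull_face z : bdg_hull P z /\ (forall i, z 0 (rshift n i) = 1) <->
  conv bdg_binary_points z.
Proof.
split=> [[[K [lam [p [lam_ge0 [lam1 [Bp ->]]]]]] y1] | Cz].
  have p_cube k := bdg_points_unit_cube (Bp k).
  apply: conv_supported => // k lam_k; exists (lsubmx (p k)).
  have pk01 : binary (lsubmx (p k)).
    move=> i; apply: int_indicator_eq1.
    by rewrite -(bdg_points_indicator i (Bp k)) (conv_comb_coord_eq1 lam_ge0 lam1 p_cube (y1 i)).
  split; first exact: (bdg_points_vertex (Bp k)).1.
  split=> //; case: (Bp k) => x [_ pk_eq].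
  have pk_x : lsubmx (p k) = x by rewrite pk_eq row_mxKl.
  by rewrite -(int_indicator_binary pk01) pk_x.
split.
  apply: conv_sub Cz => _ [x [Px [x01 ->]]]; exists x.
  by rewrite int_indicator_binary //; split=> //; apply: binary_is_vertex.
case: Cz => K [lam [p [_ [lam1 [Bp ->]]]]] i.
rewrite coord_sum_scale -[RHS]lam1; apply: eq_bigr => k _.
by case: (Bp k) => x [_ [_ ->]]; rewrite row_mxEr mxE mulr1.
Qed.

Lemma bdg_binary_points_binary z : bdg_binary_points z -> binary z.
Proof. by case=> x [_ [x01 ->]]; apply/row_mx_binary; split=> // i; rewrite mxE; right. Qed.

End BdgHull.

Fixpoint bdg_tree (n : nat) (l : seq 'I_n) : bbtree (n + n) :=
  match l with
  | [::] => BBLeaf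
  | i :: l' => BBNode (rshift n i) (BBNode (lshift n i) BBLeaf BBLeaf) (bdg_tree l')
  end.

Lemma bbsize_bdg_tree n (l : seq 'I_n) : bbsize (bdg_tree l) = (4 * size l + 1)%N.
Proof. by elim: l => [|i l IH] //=; rewrite IH; lia. Qed.

Lemma bdg_tree_leaf_region (R : realFieldType) n (P : 'rV[R]_n -> Prop)
    (l : seq 'I_n) (F G : 'rV[R]_(n + n) -> Prop) :
  (forall x, P x -> unit_cube x) -> (forall z, F z -> bdg_hull P z) ->
  is_leaf_region (bdg_tree l) F G ->
  lp_infeasible G \/ (forall z, G z <-> F z /\ forall i, i \in l -> z 0 (rshift n i) = 1).
Proof.
move=> P_cube; elim: l F => [|i l IH] F FQ /=.
  by move=> G_eq; right=> z; rewrite G_eq; split=> [|[]].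
case=> [[G_eq|G_eq]|].
- left=> z /G_eq [[/FQ Qz y0] x0].
  by move: (bdg_hull_fractional P_cube Qz y0); rewrite x0 ltxx.
- left=> z /G_eq [[/FQ Qz y0] x1].
  by move: (bdg_hull_fractional P_cube Qz y0); rewrite x1 ltxx andbF.
move=> /IH [z [/FQ //]|G_empty|G_eq]; first by left.
right=> z; rewrite G_eq; split=> [[[Fz yi] yl]|[Fz yl]].
  by split=> // j; rewrite inE => /orP[/eqP ->|/yl].
by split=> [|j jl]; [split=> //; apply: yl; rewrite inE eqxx | apply: yl; rewrite inE jl orbT].
Qed.

Theorem proposition2p5 (R : realFieldType) (n : nat)
    (P : 'rV[R]_n -> Prop) (c : 'rV[R]_n) :
  is_polytope P ->
  (forall x, P x -> forall i, 0 <= x 0 i <= 1) ->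
  (forall x : 'rV[R]_n,
     (exists y : 'rV[R]_n, bdg_hull P (row_mx x y) /\ binary (row_mx x y)) <->
     (P x /\ binary x)) /\
  exists t : bbtree (n + n),
    bb_solves (bdg_hull P) (row_mx c 0) t /\ (bbsize t <= 4 * n + 1)%N.
Proof.
move=> _ P_cube; split; first exact: bdg_hull_binary_proj.
exists (bdg_tree (enum 'I_n)); split; last by rewrite bbsize_bdg_tree size_enum_ord.
move=> G /(bdg_tree_leaf_region P_cube (fun z Qz => Qz)) [G_empty|G_eq]; first by left.
have -> : G = conv (bdg_binary_points P).
  apply: functional_extensionality => z; apply: propositional_extensionality.
  rewrite -(bdg_hull_face P_cube) G_eq.
  by split=> -[Qz y1]; split=> // i *; apply: y1; rewrite ?mem_enum.
have [G_ne|G_empty] := excluded_middle_informative (exists z, conv (bdg_binary_points P) z).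
  by right; left; apply: conv_binary_lp_integral => //; apply: bdg_binary_points_binary.
by left=> z Gz; apply: G_empty; exists z.
Qed.
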